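(* Let $n,t$ be positive integers and let $\mathcal{B}$ be a partition of $[n]$ into $t$ nonempty blocks. Let $\mathcal{B}'\subseteq\mathcal{B}$ be nonempty, let $\ell=\sum_{B\in\mathcal{B}'}|B|$, and let $\langle i_1<i_2<\cdots<i_\ell\rangle$ be the increasing enumeration of $\bigcup_{B\in\mathcal{B}'}B$. Then $K[\underline{i},\mathcal{B}']=K[\underline{i}',\mathcal{B}']$ in each of the following cases: - for every $l\in[\ell-1]$ and all $\underline{i},\underline{i}'$ with $i_l<\underline{i},\underline{i}'\le i_{l+1}$; - for all $\underline{i},\underline{i}'$ with $1\le\underline{i},\underline{i}'\le i_1$; - for all $\underline{i},\underline{i}'$ with $i_\ell<\underline{i},\underline{i}'\le n$.
   Context: Let $A(n)$ be the infinite sequence obtained by concatenating infinitely many copies (segments, numbered $1,2,\ldots$) of $\langle1,2,\ldots,n\rangle$. A position is a pair $(\kappa,v)$ consisting of a segment index $\kappa\ge1$ and a value $v\in[n]$. Positions are ordered lexicographically. A placement of a nonempty $\mathcal{B}'\subseteq\mathcal{B}$ assigns to each $x\in\bigcup_{B\in\mathcal{B}'}B$ a position $(\kappa_x,x)$, with distinct elements at distinct positions. It is valid if, for any two distinct blocks $B,C\in\mathcal{B}'$, no element of $B$ lies strictly between the smallest and the largest positions occupied by elements of $C$. The number of segments used is $\max_x\kappa_x$. $K[\underline{i},\mathcal{B}']$ is the minimum number of segments used by a valid placement of $\mathcal{B}'$ all of whose positions are $\ge(1,\underline{i})$. *)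

From mathcomp Require Import all_boot.
From Stdlib Require Import ClassicalEpsilon.
Set Implicit Arguments. Unset Strict Implicit. Unset Printing Implicit Defensive.

(* Elements of [n] are represented by x : 'I_n, with value x.+1 in {1..n}.
   A position is a pair (kappa, v) of a segment index and a value (nats). *)

Definition pos_lt (p q : nat * nat) : bool :=
  (p.1 < q.1) || ((p.1 == q.1) && (p.2 < q.2)).
Definition pos_le (p q : nat * nat) : bool := (p == q) || pos_lt p q.

Definition posof n (kappa : 'I_n -> nat) (x : 'I_n) : nat * nat :=
  (kappa x, x.+1).

Definition valid_placement n (Bp : {set {set 'I_n}}) (kappa : 'I_n -> nat) : Prop :=
  (forall x, x \in cover Bp -> 1 <= kappa x) /\
  (forall C D, C \in Bp -> D \in Bp -> C != D ->
     forall x, x \in D ->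
       ~ (exists a b, [/\ a \in C, b \in C,
            pos_lt (posof kappa a) (posof kappa x) &
            pos_lt (posof kappa x) (posof kappa b)])).

Definition segs_used n (Bp : {set {set 'I_n}}) (kappa : 'I_n -> nat) : nat :=
  \max_(x in cover Bp) kappa x.

Definition Kset n (Bp : {set {set 'I_n}}) (i : nat) (k : nat) : Prop :=
  exists kappa : 'I_n -> nat,
    [/\ valid_placement Bp kappa,
        (forall x, x \in cover Bp -> pos_le (1, i) (posof kappa x)) &
        segs_used Bp kappa = k].

Definition Kb n (Bp : {set {set 'I_n}}) (i : nat) (k : nat) : bool :=
  if excluded_middle_informative (Kset Bp i k) then true else false.

(* K[i, Bp] : the minimum of Kset (0 if no valid placement exists, which
   never happens for nonempty Bp) *)
Definition K n (Bp : {set {set 'I_n}}) (i : nat) : nat :=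
  match excluded_middle_informative (exists k, Kb Bp i k) with
  | left h => ex_minn h
  | right _ => 0
  end.

Definition union_enum n (Bp : {set {set 'I_n}}) : seq nat :=
  sort leq [seq (nat_of_ord x).+1 | x <- enum (cover Bp)].

From mathcomp Require Import all_boot.
From Stdlib Require Import ClassicalEpsilon.

Set Implicit Arguments. Unset Strict Implicit. Unset Printing Implicit Defensive.

(* The constraint that every position be >= (1, i) only bites for elements
   placed in the first segment, where it reads i <= x. Hence K[i, B'] depends
   on i only through the set of elements of the union of B' that are >= i,
   and this set is the same for all i in one gap (i_l, i_(l+1)] of the
   increasing enumeration, for all i <= i_1, and for all i > i_ell. *)

Lemma pos_le_1E i k v : pos_le (1, i) (k, v) = (1 < k) || (k == 1) && (i <= v).
Proof.
rewrite /pos_le /pos_lt /= xpair_eqE.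
by case: k => [|[|k]] //=; rewrite ?orbF ?orbT // [i <= v]leq_eqVlt.
Qed.

Lemma eq_K n (Bp : {set {set 'I_n}}) i i' :
  (forall k, Kset Bp i k <-> Kset Bp i' k) -> K Bp i = K Bp i'.
Proof.
move=> eqKset.
have eqKb : Kb Bp i =1 Kb Bp i'.
  move=> k; rewrite /Kb.
  case: excluded_middle_informative => [Ki | nKi];
    case: excluded_middle_informative => [Ki' | nKi'] //.
  - by case: nKi'; apply/eqKset.
  - by case: nKi; apply/eqKset.
rewrite /K; case: excluded_middle_informative => [ex | nex];
  case: excluded_middle_informative => [ex' | nex'] //.
- exact: eq_ex_minn.
- by case: nex'; have [k] := ex; exists k; rewrite -eqKb.
- by case: nex; have [k] := ex'; exists k; rewrite eqKb.
Qed.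

Section UnionEnum.

Variables (n : nat) (Bp : {set {set 'I_n}}).

Lemma sorted_union_enum : sorted leq (union_enum Bp).
Proof. exact: (sort_sorted leq_total). Qed.

Lemma mem_union_enum (x : 'I_n) : x \in cover Bp -> x.+1 \in union_enum Bp.
Proof. by move=> xB; rewrite mem_sort map_f ?mem_enum. Qed.

Lemma size_union_enum :
  trivIset Bp -> size (union_enum Bp) = \sum_(C in Bp) #|C|.
Proof. by move=> /eqP->; rewrite size_sort size_map -cardE. Qed.

Lemma K_threshold i i' :
  {in union_enum Bp, forall v, (i <= v) = (i' <= v)} -> K Bp i = K Bp i'.
Proof.
move=> eq_thr; apply: eq_K => k.
have eq_bound kappa x : x \in cover Bp ->
    pos_le (1, i) (posof kappa x) = pos_le (1, i') (posof kappa x).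
  by move=> xB; rewrite !pos_le_1E eq_thr ?mem_union_enum.
by split=> -[kappa [valid bound used]]; exists kappa; split=> // x xB;
  [rewrite -eq_bound | rewrite eq_bound]; auto.
Qed.

End UnionEnum.

Section SortedNth.

Variables (s : seq nat) (v : nat).
Hypotheses (s_sorted : sorted leq s) (sv : v \in s).

Lemma sorted_nth_le_mem l : l <= index v s -> nth 0 s l <= v.
Proof.
move=> le_l; rewrite -[leqRHS](nth_index 0 sv).
have lt_idx : index v s < size s by rewrite index_mem.
by apply: (sorted_leq_nth leq_trans leqnn); rewrite // inE (leq_ltn_trans le_l).
Qed.

Lemma sorted_mem_le_nth l : index v s <= l < size s -> v <= nth 0 s l.
Proof.
case/andP=> le_l lt_l; rewrite -[leqLHS](nth_index 0 sv).
by apply: (sorted_leq_nth leq_trans leqnn); rewrite // inE index_mem.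
Qed.

Lemma sorted_leq_gap l : (v <= nth 0 s l) || (nth 0 s l.+1 <= v).
Proof.
case: (leqP (index v s) l) => [le_l | lt_l]; last by rewrite sorted_nth_le_mem ?orbT.
case: (ltnP l (size s)) => [lt_ls | le_sl]; first by rewrite sorted_mem_le_nth ?le_l.
by rewrite [nth 0 s l.+1]nth_default ?orbT // (leq_trans le_sl).
Qed.

Lemma sorted_mem_le_last : v <= nth 0 s (size s).-1.
Proof.
have lt_idx : index v s < size s by rewrite index_mem.
have pos_s : 0 < size s := leq_ltn_trans (leq0n _) lt_idx.
by rewrite sorted_mem_le_nth // -ltnS prednK // lt_idx leqnn.
Qed.

End SortedNth.

Lemma leq_threshold_eq a b i i' v :
  a < i <= b -> a < i' <= b -> (v <= a) || (b <= v) -> (i <= v) = (i' <= v).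
Proof.
case/andP=> ai ib /andP[ai' ib'] /orP[va | bv].
- by rewrite (ltn_geF (leq_ltn_trans va ai)) (ltn_geF (leq_ltn_trans va ai')).
- by rewrite (leq_trans ib bv) (leq_trans ib' bv).
Qed.

Theorem lemma2 (n t : nat) (B : {set {set 'I_n}}) (Bp : {set {set 'I_n}}) :
  0 < n -> 0 < t ->
  partition B [set: 'I_n] -> #|B| = t ->
  Bp \subset B -> Bp != set0 ->
  let ell := \sum_(C in Bp) #|C| in
  let s := union_enum Bp in
  let ii := fun l => nth 0 s l.-1 in  (* ii l = i_l, 1-indexed *)
  [/\ (forall l i i', 1 <= l <= ell.-1 ->
         ii l < i <= ii l.+1 -> ii l < i' <= ii l.+1 ->
         K Bp i = K Bp i'),
      (forall i i', 1 <= i <= ii 1 -> 1 <= i' <= ii 1 -> K Bp i = K Bp i') &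
      (forall i i', ii ell < i <= n -> ii ell < i' <= n -> K Bp i = K Bp i')].
Proof.
move=> _ _ partB _ subB _ ell s ii.
have s_sorted : sorted leq s := sorted_union_enum Bp.
have size_s : size s = ell.
  exact/size_union_enum/(trivIsetS subB)/(partition_trivIset partB).
split.
- move=> [//|l] i i' _ gap_i gap_i'; apply: K_threshold => v sv.
  exact: (leq_threshold_eq gap_i gap_i' (sorted_leq_gap s_sorted sv l)).
- move=> i i' head_i head_i'; apply: K_threshold => v sv.
  by apply: (leq_threshold_eq head_i head_i'); rewrite sorted_nth_le_mem ?orbT.
- move=> i i' tail_i tail_i'; apply: K_threshold => v sv.
  by apply: (leq_threshold_eq tail_i tail_i'); rewrite /ii -size_s sorted_mem_le_last.
Qed.
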